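(* Assume $\mathsf{MA}(\sigma\text{-centered})$. Let $\kappa<\mathfrak{c}$ be a cardinal. Suppose that $A_\alpha$ and $B_\alpha$ are countable dense subsets of $2^\omega$ for each $\alpha<\kappa$, and that $A_\alpha\cap A_\beta=\varnothing$ and $B_\alpha\cap B_\beta=\varnothing$ whenever $\alpha<\beta<\kappa$. Then there exists a homeomorphism $f:2^\omega\to 2^\omega$ such that $f[A_\alpha]=B_\alpha$ for every $\alpha<\kappa$.
   Context: $2^\omega$ is the Cantor set. $\mathsf{MA}(\sigma\text{-centered})$ is Martin's Axiom restricted to $\sigma$-centered posets: for every $\sigma$-centered poset and every family of fewer than $\mathfrak{c}$ dense subsets of it there is a filter meeting all of them. *)

From Stdlib Require Import List.
Import ListNotations.

Definition Cantor : Type := nat -> bool.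

Definition agree (n : nat) (x y : Cantor) : Prop :=
  forall k, k < n -> x k = y k.

Definition continuous (f : Cantor -> Cantor) : Prop :=
  forall (x : Cantor) (n : nat), exists m : nat,
    forall y : Cantor, agree m x y -> agree n (f x) (f y).

Definition homeomorphism (f : Cantor -> Cantor) : Prop :=
  exists g : Cantor -> Cantor,
    (forall x, g (f x) = x) /\ (forall y, f (g y) = y) /\
    continuous f /\ continuous g.

Definition dense (D : Cantor -> Prop) : Prop :=
  forall (s : Cantor) (n : nat), exists x, D x /\ agree n x s.

Definition countable (D : Cantor -> Prop) : Prop :=
  exists e : nat -> Cantor, forall x, D x -> exists n, e n = x.

Definition image (f : Cantor -> Cantor) (A : Cantor -> Prop) : Cantor -> Prop :=
  fun y => exists x, A x /\ f x = y.

(** |T| < c : T injects into 2^omega, but 2^omega does not inject into T. *)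
Definition lt_continuum (T : Type) : Prop :=
  (exists f : T -> Cantor, forall a b, f a = f b -> a = b) /\
  ~ (exists g : Cantor -> T, forall x y, g x = g y -> x = y).

(** Forcing posets: p <= q means p is stronger than q. *)
Definition is_poset (P : Type) (le : P -> P -> Prop) : Prop :=
  (forall p, le p p) /\
  (forall p q, le p q -> le q p -> p = q) /\
  (forall p q r, le p q -> le q r -> le p r).

Definition centered (P : Type) (le : P -> P -> Prop) (C : P -> Prop) : Prop :=
  forall l : list P, (forall p, In p l -> C p) ->
    exists r, forall p, In p l -> le r p.

Definition sigma_centered (P : Type) (le : P -> P -> Prop) : Prop :=
  exists C : nat -> P -> Prop,
    (forall p, exists n, C n p) /\ (forall n, centered P le (C n)).

Definition dense_in (P : Type) (le : P -> P -> Prop) (D : P -> Prop) : Prop :=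
  forall p, exists q, D q /\ le q p.

Definition is_filter (P : Type) (le : P -> P -> Prop) (G : P -> Prop) : Prop :=
  (exists p, G p) /\
  (forall p q, G p -> le p q -> G q) /\
  (forall p q, G p -> G q -> exists r, G r /\ le r p /\ le r q).

Definition MA_sigma_centered : Prop :=
  forall (P : Type) (le : P -> P -> Prop),
    inhabited P -> is_poset P le -> sigma_centered P le ->
    forall (J : Type) (D : J -> P -> Prop),
      lt_continuum J -> (forall j, dense_in P le (D j)) ->
      exists G : P -> Prop, is_filter P le G /\
        forall j, exists p, G p /\ D j p.

(* A forcing condition is a finite approximation of f: a permutation of level n
   (a bijection of the words of length n, acting on the first n bits) together with
   a finite matching of points of A_a to points of B_a (same colour a) that the
   permutation respects and that is separated at level n.  Stronger conditions
   refine the permutation at a higher level and match more points.  Since the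
   colour classes are dense, every point of every A_a and B_a can be matched and
   the level can be raised; these |K x omega| < c requirements are dense.  The
   poset is sigma-centered: conditions sharing their level, their table and the
   labels (prefix and enumeration indices) of their matched pairs have a common
   extension.  A filter meeting all requirements gives a coherent sequence of
   level permutations, whose limit is the required homeomorphism. *)

From Stdlib Require Import List Arith Lia Classical ClassicalEpsilon
  FunctionalExtensionality PropExtensionality ProofIrrelevance.
From Stdlib Require Cantor.
From mathcomp Require choice.
Import ListNotations.

Definition pre (x : Cantor) (n : nat) : list bool := map x (seq 0 n).

Lemma pre_nth x n k : k < n -> nth k (pre x n) false = x k.
Proof.
  intro Hk. unfold pre.
  rewrite nth_indep with (d' := x 0) by (rewrite length_map, length_seq; lia).
  rewrite map_nth, seq_nth by lia. reflexivity.
Qed.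

Lemma pre_S x n : pre x (S n) = pre x n ++ [x n].
Proof. unfold pre. rewrite seq_S, map_app. reflexivity. Qed.

Lemma agree_pre n x y : agree n x y <-> pre x n = pre y n.
Proof.
  split.
  - intro H. apply map_ext_in. intros k Hk. apply in_seq in Hk. apply H; lia.
  - intros H k Hk. rewrite <- (pre_nth x n k Hk), <- (pre_nth y n k Hk), H. reflexivity.
Qed.

Lemma agree_refl n x : agree n x x.
Proof. intros k _; reflexivity. Qed.

Lemma agree_sym n x y : agree n x y -> agree n y x.
Proof. intros H k Hk; symmetry; auto. Qed.

Lemma agree_trans n x y z : agree n x y -> agree n y z -> agree n x z.
Proof. intros H1 H2 k Hk; rewrite H1; auto. Qed.

Lemma agree_mono m n x y : m <= n -> agree n x y -> agree m x y.
Proof. intros Hm H k Hk; apply H; lia. Qed.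

Lemma agree_dec n x y : {agree n x y} + {~ agree n x y}.
Proof.
  destruct (list_eq_dec Bool.bool_dec (pre x n) (pre y n)) as [E|E].
  - left; now apply agree_pre.
  - right; intro H; apply E; now apply agree_pre.
Qed.

(** Agreement below [m] is an equivalence relation; this tactic rewrites all
    agreements at a level into prefix equalities so [congruence] can chain them. *)
Ltac agree_as_prefixes :=
  repeat match goal with
  | H : agree _ _ _ |- _ => apply agree_pre in H
  | H : ~ agree _ _ _ |- _ => rewrite agree_pre in H
  | |- agree _ _ _ => apply agree_pre
  end.

Definition ext (s : list bool) : Cantor := fun k => nth k s false.

Lemma agree_ext_pre n x : agree n (ext (pre x n)) x.
Proof. intros k Hk. unfold ext. now apply pre_nth. Qed.

Fixpoint words (n : nat) : list (list bool) :=
  match n with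
  | 0 => [[]]
  | S n => flat_map (fun s => [s ++ [false]; s ++ [true]]) (words n)
  end.

Lemma pre_in_words x n : In (pre x n) (words n).
Proof.
  induction n as [|n IH]; simpl; [now left|].
  apply in_flat_map. exists (pre x n). split; [exact IH|].
  rewrite pre_S. destruct (x n); simpl; auto.
Qed.

Lemma differ_somewhere (x z : Cantor) : x <> z -> exists k, x k <> z k.
Proof.
  intro Hne. apply NNPP; intro H. apply Hne, functional_extensionality. intro k.
  apply NNPP; intro H'. apply H; eauto.
Qed.

Lemma separating_level_point (x : Cantor) (l : list Cantor) :
  exists m, forall x', In x' l -> agree m x x' -> x = x'.
Proof.
  induction l as [|z l [m Hm]].
  - exists 0; intros _ [].
  - destruct (classic (x = z)) as [<-|Hne].
    + exists m. intros x' [<-|H] Ha; auto.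
    + destruct (differ_somewhere x z Hne) as [k Hk].
      exists (max m (S k)). intros x' [<-|H] Ha.
      * exfalso; apply Hk, Ha; lia.
      * apply Hm; auto. eapply agree_mono; [|eauto]; lia.
Qed.

Lemma separating_level (l : list Cantor) :
  exists m, forall x x', In x l -> In x' l -> agree m x x' -> x = x'.
Proof.
  induction l as [|z l [m1 Hm1]].
  - exists 0; intros x x' [].
  - destruct (separating_level_point z l) as [m2 Hm2].
    exists (max m1 m2). intros x x' Hx Hx' Ha.
    assert (Ha1 : agree m1 x x') by (apply (agree_mono _ _ _ _ (Nat.le_max_l m1 m2) Ha)).
    assert (Ha2 : agree m2 x x') by (apply (agree_mono _ _ _ _ (Nat.le_max_r m1 m2) Ha)).
    destruct Hx as [<-|Hx], Hx' as [<-|Hx'].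
    + reflexivity.
    + now apply Hm2.
    + symmetry. apply Hm2; auto. now apply agree_sym.
    + now apply Hm1.
Qed.

(** A dense set meets every basic open set outside any given finite set:
    the target pattern below [n] is followed by a pattern that differs from
    the [i]-th listed point at coordinate [n + i]. *)
Lemma dense_avoid (D : Cantor -> Prop) : dense D ->
  forall (l : list Cantor) s n, exists x, D x /\ agree n x s /\ ~ In x l.
Proof.
  intros HD l s n.
  set (t := fun k => if k <? n then s k else negb (nth (k - n) l (fun _ => false) k)).
  destruct (HD t (n + length l)) as [x [Dx Ax]].
  exists x. split; [exact Dx|split].
  - intros k Hk. rewrite Ax by lia. unfold t. destruct (Nat.ltb_spec k n); [auto|lia].
  - intro Hin. destruct (In_nth l x (fun _ => false) Hin) as [i [Hi Hx]].
    specialize (Ax (n + i) ltac:(lia)). unfold t in Ax.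
    destruct (Nat.ltb_spec (n + i) n); [lia|].
    replace (n + i - n) with i in Ax by lia. rewrite Hx in Ax.
    destruct (x (n + i)); discriminate.
Qed.

(** ** Permutations of level [n] *)

(** These are the finite approximations of the homeomorphism. *)
Record level_perm (n : nat) (phi : Cantor -> Cantor) : Prop := {
  perm_local : forall x x', agree n x x' -> phi x = phi x';
  perm_zero : forall x k, n <= k -> phi x k = false;
  perm_onto : forall y, exists x, agree n (phi x) y;
  perm_inj : forall x x', agree n (phi x) (phi x') -> agree n x x' }.
Arguments perm_local {n phi}.
Arguments perm_zero {n phi}.
Arguments perm_onto {n phi}.
Arguments perm_inj {n phi}.

Definition refines (n : nat) (psi phi : Cantor -> Cantor) : Prop :=
  forall x, agree n (psi x) (phi x).

Definition trunc (m : nat) (b : Cantor) : Cantor :=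
  fun k => if k <? m then b k else false.

Lemma agree_trunc m b : agree m (trunc m b) b.
Proof. intros k Hk; unfold trunc; destruct (Nat.ltb_spec k m); [reflexivity|lia]. Qed.

(** A permutation of level [n] refines to level [m >= n], acting as the
    identity on the bits between [n] and [m]. *)
Lemma level_perm_lift n m phi : n <= m -> level_perm n phi ->
  exists psi, level_perm m psi /\ refines n psi phi.
Proof.
  intros Hnm Hphi.
  exists (fun x k => if k <? n then phi x k else if k <? m then x k else false).
  split; [split|].
  - intros x x' H. apply functional_extensionality; intro k.
    rewrite (perm_local Hphi x x') by (eapply agree_mono; [|eauto]; lia).
    destruct (Nat.ltb_spec k n), (Nat.ltb_spec k m); auto.
  - intros x k Hk. destruct (Nat.ltb_spec k n), (Nat.ltb_spec k m); auto; lia.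
  - intro y. destruct (perm_onto Hphi y) as [x Hx].
    set (x' := fun k => if k <? n then x k else y k).
    assert (E : phi x' = phi x).
    { apply (perm_local Hphi). intros k Hk. unfold x'. destruct (Nat.ltb_spec k n); [auto|lia]. }
    exists x'. rewrite E. intros k Hk. unfold x'.
    destruct (Nat.ltb_spec k n), (Nat.ltb_spec k m); auto; lia.
  - intros x x' H k Hk.
    assert (Hn : agree n x x').
    { apply (perm_inj Hphi). intros j Hj. specialize (H j ltac:(lia)). cbv beta in H.
      destruct (Nat.ltb_spec j n); [exact H|lia]. }
    destruct (Nat.ltb_spec k n); [auto|].
    specialize (H k Hk). cbv beta in H.
    destruct (Nat.ltb_spec k n), (Nat.ltb_spec k m); auto; lia.
  - intros x k Hk. cbv beta. destruct (Nat.ltb_spec k n); [reflexivity|lia].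
Qed.

Definition swap (m : nat) (c b z : Cantor) : Cantor :=
  if agree_dec m z c then b else if agree_dec m z b then c else z.

Lemma swap_resp m c b z z' : agree m z z' -> agree m (swap m c b z) (swap m c b z').
Proof. intro H. unfold swap. repeat destruct (agree_dec _ _ _); agree_as_prefixes; congruence. Qed.

Lemma swap_invol m c b z : agree m (swap m c b (swap m c b z)) z.
Proof. unfold swap. repeat destruct (agree_dec _ _ _); agree_as_prefixes; congruence. Qed.

Lemma swap_low n m c b z : n <= m -> agree n c b -> agree n (swap m c b z) z.
Proof.
  intros Hnm Hcb. unfold swap.
  destruct (agree_dec m z c) as [H|_]; [|destruct (agree_dec m z b) as [H|_]].
  - apply agree_sym in Hcb. eapply agree_trans; [exact Hcb|].
    apply agree_sym, (agree_mono n m); assumption.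
  - eapply agree_trans; [exact Hcb|]. apply agree_sym, (agree_mono n m); assumption.
  - apply agree_refl.
Qed.

Lemma level_perm_swap m c b psi : level_perm m psi -> level_perm m (fun x => trunc m (swap m c b (psi x))).
Proof.
  intro Hpsi. split.
  - intros x x' H. now rewrite (perm_local Hpsi x x' H).
  - intros x k Hk. unfold trunc. destruct (Nat.ltb_spec k m); [lia|reflexivity].
  - intro y. destruct (perm_onto Hpsi (swap m c b y)) as [x Hx]. exists x.
    eapply agree_trans; [apply agree_trunc|].
    eapply agree_trans; [apply swap_resp, Hx|apply swap_invol].
  - intros x x' H. apply (perm_inj Hpsi).
    eapply agree_trans; [apply agree_sym, swap_invol|].
    eapply agree_trans; [|apply (swap_invol m c b)]. apply swap_resp.
    eapply agree_trans; [apply agree_sym, agree_trunc|].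
    eapply agree_trans; [exact H|apply agree_trunc].
Qed.

(** ** Finite partial matchings *)

Definition pairs (L : list (Cantor * Cantor)) : Cantor -> Cantor -> Prop :=
  fun x y => In (x, y) L.

Definition respects (m : nat) (psi : Cantor -> Cantor) (F : Cantor -> Cantor -> Prop) : Prop :=
  forall x y, F x y -> agree m (psi x) y.

Definition separated (m : nat) (F : Cantor -> Cantor -> Prop) : Prop :=
  forall x y x' y', F x y -> F x' y' -> agree m x x' \/ agree m y y' -> x = x' /\ y = y'.

Definition partial_bij (F : Cantor -> Cantor -> Prop) : Prop :=
  forall x y x' y', F x y -> F x' y' -> (x = x' <-> y = y').

Lemma separated_partial_bij m F : separated m F -> partial_bij F.
Proof.
  intros H x y x' y' Hxy Hxy'. split; intro E; subst;
    apply (H _ _ _ _ Hxy Hxy'); auto using agree_refl.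
Qed.

Lemma partial_bij_add (F : Cantor -> Cantor -> Prop) x0 y0 :
  partial_bij F -> (forall y, ~ F x0 y) -> (forall x, ~ F x y0) ->
  partial_bij (fun x y => F x y \/ pairs [(x0, y0)] x y).
Proof.
  intros Hpb Hx0 Hy0 x y x' y' [H|[E|[]]] [H'|[E'|[]]].
  - exact (Hpb x y x' y' H H').
  - injection E' as <- <-. split; intro E; subst; exfalso; [exact (Hx0 y H)|exact (Hy0 x H)].
  - injection E as <- <-. split; intro E; subst; exfalso; [exact (Hx0 y' H')|exact (Hy0 x' H')].
  - injection E as <- <-. injection E' as <- <-. tauto.
Qed.

Lemma partial_bij_separated L : partial_bij (pairs L) ->
  exists m1, forall m, m1 <= m -> separated m (pairs L).
Proof.
  intro HL. destruct (separating_level (map fst L ++ map snd L)) as [m1 Hm1].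
  exists m1. intros m Hm x y x' y' Hxy Hxy' Ha.
  assert (Hfst : forall u v, In (u, v) L -> In u (map fst L ++ map snd L)).
  { intros u v H. apply in_or_app; left. now apply (in_map fst) in H. }
  assert (Hsnd : forall u v, In (u, v) L -> In v (map fst L ++ map snd L)).
  { intros u v H. apply in_or_app; right. now apply (in_map snd) in H. }
  destruct Ha as [Ha|Ha].
  - assert (x = x') as E by (apply Hm1; eauto; eapply agree_mono; [|eauto]; lia).
    split; [exact E|]. now apply (HL x y x' y').
  - assert (y = y') as E by (apply Hm1; eauto; eapply agree_mono; [|eauto]; lia).
    split; [|exact E]. now apply (HL x y x' y').
Qed.

(** One step of realizing a matching: compose with the transposition that moves
    the cylinder of [psi a] onto the cylinder of [b]. *)
Lemma respects_swap n m phi psi a b L :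
  n <= m -> level_perm m psi -> refines n psi phi -> agree n (phi a) b ->
  respects m psi (pairs L) -> separated m (pairs ((a, b) :: L)) ->
  exists psi', level_perm m psi' /\ refines n psi' phi /\ respects m psi' (pairs ((a, b) :: L)).
Proof.
  intros Hnm Hpsi Href Hab HL Hsep.
  exists (fun x => trunc m (swap m (psi a) b (psi x))). split; [|split].
  - now apply level_perm_swap.
  - intro x. eapply agree_trans; [apply (agree_mono n m); [exact Hnm|apply agree_trunc]|].
    eapply agree_trans; [apply swap_low; [exact Hnm|]|apply Href].
    eapply agree_trans; [apply Href|exact Hab].
  - intros x y Hxy. eapply agree_trans; [apply agree_trunc|].
    unfold swap. destruct (agree_dec m (psi x) (psi a)) as [H1|H1].
    + assert (x = a /\ y = b) as [_ ->]; [|apply agree_refl].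
      apply (Hsep x y a b); [exact Hxy|now left|left; exact (perm_inj Hpsi _ _ H1)].
    + destruct Hxy as [E|Hxy].
      * injection E as -> ->. exfalso; apply H1, agree_refl.
      * destruct (agree_dec m (psi x) b) as [H2|H2]; [|exact (HL x y Hxy)].
        assert (x = a /\ y = b) as [-> _]; [|exfalso; apply H1, agree_refl].
        apply (Hsep x y a b); [now right|now left|right].
        eapply agree_trans; [apply agree_sym, (HL x y Hxy)|exact H2].
Qed.

Lemma realize_matching n m phi L :
  n <= m -> level_perm n phi -> respects n phi (pairs L) -> separated m (pairs L) ->
  exists psi, level_perm m psi /\ refines n psi phi /\ respects m psi (pairs L).
Proof.
  intros Hnm Hphi. induction L as [|[a b] L IH]; intros HL Hsep.
  - destruct (level_perm_lift n m phi Hnm Hphi) as [psi [Hpsi Href]].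
    exists psi. split; [exact Hpsi|split; [exact Href|]]. intros x y [].
  - destruct IH as [psi [Hpsi [Href Hrsp]]].
    + intros x y Hxy. apply HL. now right.
    + intros x y x' y' Hxy Hxy'. apply Hsep; now right.
    + apply (respects_swap n m phi psi a b L); auto. apply HL. now left.
Qed.

Lemma extend_level n phi L m0 :
  level_perm n phi -> respects n phi (pairs L) -> partial_bij (pairs L) ->
  exists m psi, m0 <= m /\ n <= m /\ level_perm m psi /\ refines n psi phi /\
    respects m psi (pairs L) /\ separated m (pairs L).
Proof.
  intros Hphi HL Hpb. destruct (partial_bij_separated L Hpb) as [m1 Hm1].
  set (m := max m0 (max n m1)).
  assert (Hsep : separated m (pairs L)) by (apply Hm1; lia).
  destruct (realize_matching n m phi L ltac:(lia) Hphi HL Hsep) as [psi [Hpsi [Href Hrsp]]].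
  exists m, psi. split; [lia|split; [lia|auto]].
Qed.

(** ** Limits of coherent sequences of level permutations *)

Lemma diagonal_limit (lev : nat -> nat) (u : nat -> Cantor) :
  (forall k, k < lev k) ->
  (forall i j, agree (min (lev i) (lev j)) (u i) (u j)) ->
  forall k, agree (lev k) (u k) (fun j => u j j).
Proof.
  intros Hlev Hcoh k j Hj. apply (Hcoh k j). specialize (Hlev j). lia.
Qed.

Section Limit.
Variable lev : nat -> nat.
Variable phi : nat -> Cantor -> Cantor.
Hypothesis phi_perm : forall k, level_perm (lev k) (phi k).
Hypothesis lev_gt : forall k, k < lev k.
Hypothesis phi_coherent : forall i j x, agree (min (lev i) (lev j)) (phi i x) (phi j x).

(** Inverses of coherent level permutations are coherent: compare both at the
    smaller level, where the permutation of smaller level is injective. *)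
Lemma inverses_coherent (psi : nat -> Cantor -> Cantor) :
  (forall k y, agree (lev k) (phi k (psi k y)) y) ->
  forall i j y, agree (min (lev i) (lev j)) (psi i y) (psi j y).
Proof.
  intros Hpsi.
  assert (Hle : forall i j y, lev i <= lev j -> agree (lev i) (psi i y) (psi j y)).
  { intros i j y Hij. apply (perm_inj (phi_perm i)).
    eapply agree_trans; [apply Hpsi|]. apply agree_sym.
    eapply agree_trans; [apply (agree_mono (lev i) (min (lev i) (lev j))); [lia|apply phi_coherent]|].
    apply (agree_mono _ (lev j)); [exact Hij|apply Hpsi]. }
  intros i j y. destruct (Nat.le_ge_cases (lev i) (lev j)) as [H|H].
  - rewrite Nat.min_l by exact H. now apply Hle.
  - rewrite Nat.min_r by exact H. apply agree_sym. now apply Hle.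
Qed.

Lemma limit_homeomorphism :
  exists f, homeomorphism f /\ forall k x, agree (lev k) (phi k x) (f x).
Proof.
  destruct (choice (fun (ky : nat * Cantor) z => agree (lev (fst ky)) (phi (fst ky) z) (snd ky)))
    as [inv Hinv].
  { intros [k y]. exact (perm_onto (phi_perm k) y). }
  set (psi := fun k y => inv (k, y)).
  assert (Hpsi : forall k y, agree (lev k) (phi k (psi k y)) y) by (intros k y; exact (Hinv (k, y))).
  set (f := fun x j => phi j x j).
  set (g := fun y j => psi j y j).
  assert (Hf : forall k x, agree (lev k) (phi k x) (f x)).
  { intros k x. exact (diagonal_limit lev (fun j => phi j x) lev_gt (fun i j => phi_coherent i j x) k). }
  assert (Hg : forall k y, agree (lev k) (psi k y) (g y)).
  { intros k y. exact (diagonal_limit lev (fun j => psi j y) lev_gt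
      (fun i j => inverses_coherent psi Hpsi i j y) k). }
  assert (Heq : forall x y, (forall k, agree (lev k) x y) -> x = y).
  { intros x y H. apply functional_extensionality; intro k. apply (H k), lev_gt. }
  exists f. split; [exists g; split; [|split; [|split]]|exact Hf].
  - intro x. apply Heq; intro k. eapply agree_trans; [apply agree_sym, Hg|].
    apply (perm_inj (phi_perm k)). eapply agree_trans; [apply Hpsi|]. apply agree_sym, Hf.
  - intro y. apply Heq; intro k. eapply agree_trans; [apply agree_sym, Hf|].
    rewrite <- (perm_local (phi_perm k) (psi k y) (g y) (Hg k y)). apply Hpsi.
  - intros x n. exists (lev n). intros y Ha. apply (agree_mono n (lev n)); [apply Nat.lt_le_incl, lev_gt|].
    eapply agree_trans; [apply agree_sym, Hf|].
    rewrite (perm_local (phi_perm n) x y Ha). apply Hf.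
  - intros x n. exists (lev n). intros y Ha. apply (agree_mono n (lev n)); [apply Nat.lt_le_incl, lev_gt|].
    eapply agree_trans; [apply agree_sym, Hg|]. eapply agree_trans; [|apply Hg].
    apply (perm_inj (phi_perm n)). eapply agree_trans; [apply Hpsi|].
    eapply agree_trans; [exact Ha|]. apply agree_sym, Hpsi.
Qed.

End Limit.

(** ** Cardinal arithmetic below the continuum *)

(** An injection of [2^omega * omega] into [2^omega]: [k] ones, a zero, then [x]. *)
Definition tag (x : Cantor) (k : nat) : Cantor :=
  fun j => if j <? k then true else if j =? k then false else x (j - S k).

Lemma tag_inj x k x' k' : tag x k = tag x' k' -> x = x' /\ k = k'.
Proof.
  intro E.
  assert (Hk : forall x x' k k', k < k' -> tag x k <> tag x' k').
  { clear. intros x x' k k' Hlt E. assert (H := f_equal (fun f => f k) E). unfold tag in H.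
    rewrite Nat.ltb_irrefl, Nat.eqb_refl in H. destruct (Nat.ltb_spec k k'); [discriminate|lia]. }
  assert (k = k') as <-.
  { destruct (lt_eq_lt_dec k k') as [[H|H]|H]; auto.
    - exfalso; exact (Hk x x' k k' H E).
    - exfalso. exact (Hk x' x k' k H (eq_sym E)). }
  split; [|reflexivity]. apply functional_extensionality; intro t.
  assert (H := f_equal (fun f => f (S k + t)) E). unfold tag in H; cbv beta in H.
  destruct (Nat.ltb_spec (S k + t) k); [lia|]. destruct (Nat.eqb_spec (S k + t) k); [lia|].
  replace (S k + t - S k) with t in H by lia. exact H.
Qed.

(** View [2^omega]
    as [(2^omega)^omega]; either for some [n] the points sent into [T * {n}] take
    every value in their [n]-th component, which yields the injection, or a
    diagonal point avoids its own fibre, which is absurd. *)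
Lemma injection_from_countable_union (T : Type) (g : Cantor -> T * nat) :
  (forall x y, g x = g y -> x = y) -> exists h : Cantor -> T, forall x y, h x = h y -> x = y.
Proof.
  intro Hg.
  set (comp := fun (x : Cantor) (n t : nat) => x (Cantor.to_nat (n, t))).
  assert (comp_onto : forall z : nat -> Cantor, exists x, comp x = z).
  { intro z. exists (fun j => let p := Cantor.of_nat j in z (fst p) (snd p)).
    apply functional_extensionality; intro n. apply functional_extensionality; intro t.
    unfold comp. rewrite Cantor.cancel_of_to. reflexivity. }
  destruct (classic (exists n, forall z, exists x, snd (g x) = n /\ comp x n = z)) as [[n Hn]|Hn].
  - destruct (choice _ Hn) as [sel Hsel].
    exists (fun z => fst (g (sel z))). intros z z' H.
    destruct (Hsel z) as [H1 <-], (Hsel z') as [H1' <-].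
    f_equal. apply Hg. destruct (g (sel z)), (g (sel z')); simpl in *; congruence.
  - exfalso.
    assert (Hmiss : forall n, exists z, forall x, snd (g x) = n -> comp x n <> z).
    { intro n. apply NNPP; intro H. apply Hn. exists n. intro z.
      apply NNPP; intro H'. apply H. exists z. intros x Hx Ez. apply H'. eauto. }
    destruct (choice _ Hmiss) as [Z HZ]. destruct (comp_onto Z) as [x Hx].
    apply (HZ (snd (g x)) x eq_refl). now rewrite Hx.
Qed.

Lemma lt_continuum_prod (K : Type) : lt_continuum K -> lt_continuum (K * nat).
Proof.
  intros [[i Hi] Hno]. split.
  - exists (fun p => tag (i (fst p)) (snd p)). intros [a k] [b k'] E. simpl in E.
    apply tag_inj in E as [E ->]. now rewrite (Hi a b E).
  - intros [g Hg]. apply Hno. exact (injection_from_countable_union K g Hg).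
Qed.

(** Codes of forcing conditions: a level, a table of words, and labelled words,
    numbered injectively. *)
Section Codes.
Import choice.

Definition code (d : nat * list (list bool) * list (list bool * nat * nat)) : nat :=
  pickle d.

Lemma code_inj d1 d2 : code d1 = code d2 -> d1 = d2.
Proof. exact (@ssrfun.pcan_inj _ _ _ _ pickleK d1 d2). Qed.

End Codes.

Definition table (n : nat) (phi : Cantor -> Cantor) : list (list bool) :=
  map (fun s => pre (phi (ext s)) n) (words n).

Lemma table_agree n phi1 phi2 : level_perm n phi1 -> level_perm n phi2 ->
  table n phi1 = table n phi2 -> refines n phi1 phi2.
Proof.
  intros H1 H2 E x.
  rewrite (perm_local H1 x (ext (pre x n))), (perm_local H2 x (ext (pre x n)))
    by apply agree_sym, agree_ext_pre.
  apply agree_pre. exact (ext_in_map E _ (pre_in_words x n)).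
Qed.

Lemma Forall2_in_left {X Y} (R : X -> Y -> Prop) l T u :
  Forall2 R l T -> In u l -> exists t, In t T /\ R u t.
Proof.
  induction 1 as [|u' t' l T Hr _ IH]; simpl; [tauto|].
  intros [<-|H]; [eauto|]. destruct (IH H) as [t [Ht Hrt]]; eauto.
Qed.

Lemma Forall2_in_right {X Y} (R : X -> Y -> Prop) l T t :
  Forall2 R l T -> In t T -> exists u, In u l /\ R u t.
Proof.
  induction 1 as [|u' t' l T Hr _ IH]; simpl; [tauto|].
  intros [<-|H]; [eauto|]. destruct (IH H) as [u [Hu Hru]]; eauto.
Qed.

(** ** The forcing poset *)

Section Forcing.

Variable K : Type.
Variables A B : K -> Cantor -> Prop.
Variables eA eB : K -> nat -> Cantor.
Hypothesis eA_onto : forall a x, A a x -> exists i, eA a i = x.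
Hypothesis eB_onto : forall a y, B a y -> exists j, eB a j = y.
Hypothesis A_dense : forall a, dense (A a).
Hypothesis B_dense : forall a, dense (B a).
Hypothesis A_disj : forall a b x, A a x -> A b x -> a = b.
Hypothesis B_disj : forall a b y, B a y -> B b y -> a = b.

Record valid (n : nat) (phi : Cantor -> Cantor) (F : Cantor -> Cantor -> Prop) : Prop := {
  valid_perm : level_perm n phi;
  valid_finite : exists l, forall x y, F x y <-> pairs l x y;
  valid_colour : forall x y, F x y -> exists a, A a x /\ B a y;
  valid_respects : respects n phi F;
  valid_separated : separated n F }.
Arguments valid_perm {n phi F}.
Arguments valid_finite {n phi F}.
Arguments valid_colour {n phi F}.
Arguments valid_respects {n phi F}.
Arguments valid_separated {n phi F}.

Record cond : Type := Cond {
  lev : nat;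
  approx : Cantor -> Cantor;
  matched : Cantor -> Cantor -> Prop;
  cond_valid : valid lev approx matched }.

Definition stronger (q p : cond) : Prop :=
  lev p <= lev q /\ refines (lev p) (approx q) (approx p) /\
  (forall x y, matched p x y -> matched q x y).

Lemma stronger_refl p : stronger p p.
Proof. split; [lia|split; [intro; apply agree_refl|auto]]. Qed.

Lemma stronger_trans p q r : stronger p q -> stronger q r -> stronger p r.
Proof.
  intros [Hl1 [Hr1 Hm1]] [Hl2 [Hr2 Hm2]]. split; [lia|split; [|auto]].
  intro x. eapply agree_trans; [|apply Hr2]. eapply agree_mono; [|apply Hr1]; exact Hl2.
Qed.

(** Antisymmetry: level permutations vanish above their level, and [valid] is a [Prop]. *)
Lemma cond_poset : is_poset cond stronger.
Proof.
  split; [exact stronger_refl|split; [|exact stronger_trans]].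
  intros [n phi F Hv] [n' phi' F' Hv'] [Hl1 [Hr1 Hm1]] [Hl2 [_ Hm2]]; simpl in *.
  assert (n' = n) as -> by lia.
  assert (phi = phi') as <-.
  { apply functional_extensionality; intro x. apply functional_extensionality; intro k.
    destruct (Nat.lt_ge_cases k n) as [Hk|Hk]; [exact (Hr1 x k Hk)|].
    rewrite (perm_zero (valid_perm Hv)), (perm_zero (valid_perm Hv')); auto. }
  assert (F = F') as <-.
  { apply functional_extensionality; intro x. apply functional_extensionality; intro y.
    apply propositional_extensionality; split; auto. }
  f_equal. apply proof_irrelevance.
Qed.

Lemma valid_trivial : valid 0 (fun _ _ => false) (fun _ _ => False).
Proof.
  split; [split| |intros ? ? []|intros ? ? []|intros ? ? ? ? []].
  - reflexivity.
  - reflexivity.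
  - intro y; exists y; intros k Hk; lia.
  - intros x x' _ k Hk; lia.
  - exists []. unfold pairs; simpl; tauto.
Qed.

Definition cond0 : cond := Cond 0 _ _ valid_trivial.

Lemma cond_extend p L0 m0 :
  (forall x y, In (x, y) L0 -> (exists a, A a x /\ B a y) /\ agree (lev p) (approx p x) y) ->
  partial_bij (fun x y => matched p x y \/ pairs L0 x y) ->
  exists q, stronger q p /\ m0 <= lev q /\ forall x y, pairs L0 x y -> matched q x y.
Proof.
  intros HL0 Hpb. destruct (cond_valid p) as [Hperm [l Hl] Hcol Hrsp _].
  set (F := fun x y => matched p x y \/ pairs L0 x y).
  assert (HF : forall x y, F x y <-> pairs (l ++ L0) x y).
  { intros x y. unfold F. rewrite Hl. unfold pairs. rewrite in_app_iff. reflexivity. }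
  destruct (extend_level (lev p) (approx p) (l ++ L0) m0 Hperm) as
    [m [psi [Hm0 [Hnm [Hpsi [Href [Hrsp' Hsep]]]]]]].
  - intros x y H. apply HF in H as [H|H]; [exact (Hrsp x y H)|apply HL0, H].
  - intros x y x' y' H H'. apply Hpb; apply HF; assumption.
  - assert (Hv : valid m psi F).
    { split; [exact Hpsi|exists (l ++ L0); exact HF| | |].
      - intros x y [H|H]; [exact (Hcol x y H)|apply HL0, H].
      - intros x y H. apply Hrsp', HF, H.
      - intros x y x' y' H H'. apply Hsep; apply HF; assumption. }
    exists (Cond m psi F Hv). split; [split; [exact Hnm|split; [exact Href|]]|split; [exact Hm0|]];
      intros x y H; simpl; unfold F; auto.
Qed.

Lemma add_pair p x0 y0 :
  (exists a, A a x0 /\ B a y0) -> agree (lev p) (approx p x0) y0 ->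
  (forall y, ~ matched p x0 y) -> (forall x, ~ matched p x y0) ->
  exists q, stronger q p /\ matched q x0 y0.
Proof.
  intros Hcol Hagr Hx0 Hy0.
  destruct (cond_extend p [(x0, y0)] 0) as [q [Hqp [_ Hq]]].
  - intros x y [E|[]]. injection E as <- <-. split; assumption.
  - apply partial_bij_add; [|exact Hx0|exact Hy0].
    exact (separated_partial_bij _ _ (valid_separated (cond_valid p))).
  - exists q. split; [exact Hqp|]. apply Hq. now left.
Qed.

(** Every point of [A a] can be matched: its partner is chosen in [B a], in the
    cylinder prescribed by the permutation, outside the finite range so far. *)
Lemma match_A p a x0 : A a x0 -> exists q, stronger q p /\ exists y, matched q x0 y.
Proof.
  intro Hx0. destruct (classic (exists y, matched p x0 y)) as [Hin|Hnew].
  { exists p. split; [apply stronger_refl|exact Hin]. }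
  destruct (valid_finite (cond_valid p)) as [l Hl].
  destruct (dense_avoid (B a) (B_dense a) (map snd l) (approx p x0) (lev p))
    as [y0 [Hy0 [Hagr Hnot]]].
  destruct (add_pair p x0 y0) as [q [Hqp Hq]].
  - exists a; split; assumption.
  - apply agree_sym, Hagr.
  - intros y H. apply Hnew; eauto.
  - intros x H. apply Hnot, in_map_iff. exists (x, y0). split; [reflexivity|apply Hl, H].
  - exists q. split; [exact Hqp|eauto].
Qed.

Lemma match_B p a y0 : B a y0 -> exists q, stronger q p /\ exists x, matched q x y0.
Proof.
  intro Hy0. destruct (classic (exists x, matched p x y0)) as [Hin|Hnew].
  { exists p. split; [apply stronger_refl|exact Hin]. }
  destruct (cond_valid p) as [Hperm [l Hl] _ _ _].
  destruct (perm_onto Hperm y0) as [z Hz].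
  destruct (dense_avoid (A a) (A_dense a) (map fst l) z (lev p)) as [x0 [Hx0 [Hagr Hnot]]].
  destruct (add_pair p x0 y0) as [q [Hqp Hq]].
  - exists a; split; assumption.
  - rewrite (perm_local Hperm x0 z Hagr). exact Hz.
  - intros y H. apply Hnot, in_map_iff. exists (x0, y). split; [reflexivity|apply Hl, H].
  - intros x H. apply Hnew; eauto.
  - exists q. split; [exact Hqp|eauto].
Qed.

Lemma deepen p k : exists q, stronger q p /\ k <= lev q.
Proof.
  destruct (cond_extend p [] k) as [q [Hqp [Hk _]]].
  - intros x y [].
  - intros x y x' y' [H|[]] [H'|[]].
    exact (separated_partial_bij _ _ (valid_separated (cond_valid p)) x y x' y' H H').
  - exists q; split; assumption.
Qed.

Definition requirement (j : K * nat) (p : cond) : Prop :=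
  let (a, k) := j in
  k <= lev p /\ (A a (eA a k) -> exists y, matched p (eA a k) y) /\
  (B a (eB a k) -> exists x, matched p x (eB a k)).

Lemma requirement_dense j : dense_in cond stronger (requirement j).
Proof.
  destruct j as [a k]. intro p.
  assert (HA : exists q, stronger q p /\ (A a (eA a k) -> exists y, matched q (eA a k) y)).
  { destruct (classic (A a (eA a k))) as [H|H].
    - destruct (match_A p a _ H) as [q [Hqp Hq]]. eauto.
    - exists p. split; [apply stronger_refl|tauto]. }
  destruct HA as [q1 [Hq1 HA]].
  assert (HB : exists q, stronger q q1 /\ (B a (eB a k) -> exists x, matched q x (eB a k))).
  { destruct (classic (B a (eB a k))) as [H|H].
    - destruct (match_B q1 a _ H) as [q [Hqp Hq]]. eauto.
    - exists q1. split; [apply stronger_refl|tauto]. }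
  destruct HB as [q2 [Hq2 HB]].
  destruct (deepen q2 k) as [q3 [Hq3 Hk]].
  exists q3. split; [split; [exact Hk|split]|].
  - intro H. destruct (HA H) as [y Hy]. exists y. apply Hq3, Hq2, Hy.
  - intro H. destruct (HB H) as [x Hx]. exists x. apply Hq3, Hx.
  - eapply stronger_trans; [exact Hq3|]. eapply stronger_trans; eassumption.
Qed.

(** ** Sigma-centeredness *)

Definition label (n : nat) (u : Cantor * Cantor) (t : list bool * nat * nat) : Prop :=
  let '(x, y) := u in let '(w, i, j) := t in
  w = pre x n /\ exists a, A a x /\ B a y /\ eA a i = x /\ eB a j = y.

Definition key_class (k : nat) (p : cond) : Prop :=
  exists l T, (forall x y, matched p x y <-> pairs l x y) /\ Forall2 (label (lev p)) l T /\
    code (lev p, table (lev p) (approx p), T) = k.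

Lemma key_cover p : exists k, key_class k p.
Proof.
  destruct (cond_valid p) as [_ [l Hl] Hcol _ _].
  assert (HT : exists T, Forall2 (label (lev p)) l T).
  { assert (Hl' : forall x y, In (x, y) l -> exists a, A a x /\ B a y) by
      (intros x y H; apply Hcol, Hl, H).
    clear Hl. induction l as [|[x y] l IH].
    - exists []; constructor.
    - destruct IH as [T HT]. { intros u v H. apply Hl'. now right. }
      destruct (Hl' x y (or_introl eq_refl)) as [a [Ha Hb]].
      destruct (eA_onto a x Ha) as [i Ei], (eB_onto a y Hb) as [j Ej].
      exists ((pre x (lev p), i, j) :: T). constructor; [|exact HT].
      split; [reflexivity|]. exists a; auto. }
  destruct HT as [T HT]. eexists. exists l, T. split; [exact Hl|split; [exact HT|reflexivity]].
Qed.

Lemma key_same k p q : key_class k p -> key_class k q ->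
  lev p = lev q /\ refines (lev p) (approx p) (approx q).
Proof.
  intros [l [T [_ [_ Hk]]]] [l' [T' [_ [_ Hk']]]].
  rewrite <- Hk' in Hk. apply code_inj in Hk. injection Hk as En Etab _.
  split; [exact En|]. rewrite <- En in Etab.
  apply table_agree; [exact (valid_perm (cond_valid p))| |exact Etab].
  rewrite En. exact (valid_perm (cond_valid q)).
Qed.

(** Pairs of two conditions with the same key whose first points are close are
    either equal or have distinct first and second points: the label of the first
    pair is carried by a pair of the second condition, which must be the other pair. *)
Lemma key_matching k p q x y x' y' : key_class k p -> key_class k q ->
  matched p x y -> matched q x' y' -> agree (lev p) x x' -> (x = x' <-> y = y').
Proof.
  intros Hp Hq Hxy Hxy' Ha.
  destruct (key_same k p q Hp Hq) as [En _].
  destruct Hp as [l [T [Hl [HT Hk]]]], Hq as [l' [T' [Hl' [HT' Hk']]]].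
  rewrite <- Hk' in Hk. apply code_inj in Hk. injection Hk as _ _ ET. subst T'.
  destruct (Forall2_in_left _ _ _ _ HT (proj1 (Hl x y) Hxy)) as [[[w i] j] [Ht Hlab]].
  destruct (Forall2_in_right _ _ _ _ HT' Ht) as [[x'' y''] [Hin Hlab']].
  destruct Hlab as [Ew [a [Ha1 [Hb1 [Ei Ej]]]]], Hlab' as [Ew' [a' [Ha2 [Hb2 [Ei' Ej']]]]].
  assert (x'' = x' /\ y'' = y') as [-> ->].
  { apply (valid_separated (cond_valid q) x'' y'' x' y'); [apply Hl', Hin|exact Hxy'|left].
    rewrite <- En. eapply agree_trans; [|exact Ha]. apply agree_pre. congruence. }
  split; intro E.
  - assert (a = a') as <- by (apply (A_disj a a' x); [exact Ha1|rewrite E; exact Ha2]).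
    congruence.
  - assert (a = a') as <- by (apply (B_disj a a' y); [exact Hb1|rewrite E; exact Hb2]).
    congruence.
Qed.

Lemma key_partial_bij k p q x y x' y' : key_class k p -> key_class k q ->
  matched p x y -> matched q x' y' -> (x = x' <-> y = y').
Proof.
  intros Hp Hq Hxy Hxy'. split; intro E.
  - apply (key_matching k p q x y x' y'); auto. subst; apply agree_refl.
  - apply (key_matching k p q x y x' y'); auto.
    destruct (key_same k p q Hp Hq) as [En Href].
    apply (perm_inj (valid_perm (cond_valid p))).
    eapply agree_trans; [apply (valid_respects (cond_valid p)), Hxy|]. subst y'.
    eapply agree_trans; [|apply agree_sym, Href].
    rewrite En. apply agree_sym, (valid_respects (cond_valid q)), Hxy'.
Qed.

Lemma matchings_union (ps : list cond) :
  exists L, forall x y, pairs L x y <-> exists p, In p ps /\ matched p x y.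
Proof.
  induction ps as [|p ps [L HL]].
  - exists []. unfold pairs; simpl. firstorder.
  - destruct (valid_finite (cond_valid p)) as [l Hl].
    exists (l ++ L). intros x y. unfold pairs in *. rewrite in_app_iff, HL, <- Hl. simpl.
    split; [intros [H|[p' [Hp' H]]]; eauto|intros [p' [[<-|Hp'] H]]; eauto].
Qed.

Lemma stronger_same_key k p1 p q : key_class k p1 -> key_class k p -> stronger q p1 ->
  (forall x y, matched p x y -> matched q x y) -> stronger q p.
Proof.
  intros H1 Hp [Hl [Href _]] Hm. destruct (key_same k p1 p H1 Hp) as [En Href'].
  unfold stronger. rewrite <- En. split; [exact Hl|split; [|exact Hm]].
  intro x. eapply agree_trans; [apply Href|apply Href'].
Qed.

Lemma key_centered k : centered cond stronger (key_class k).
Proof.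
  intros ps Hps. destruct ps as [|p1 ps]; [exists cond0; intros p []|].
  assert (H1 : key_class k p1) by (apply Hps; now left).
  destruct (matchings_union (p1 :: ps)) as [L HL].
  destruct (cond_extend p1 L 0) as [q [Hq1 [_ Hq]]].
  - intros x y H. apply HL in H as [p [Hp Hxy]].
    destruct (key_same k p1 p H1 (Hps p Hp)) as [En Href].
    split; [exact (valid_colour (cond_valid p) x y Hxy)|].
    eapply agree_trans; [apply Href|]. rewrite En. exact (valid_respects (cond_valid p) x y Hxy).
  - assert (Hin : forall x y, matched p1 x y \/ pairs L x y ->
                  exists p, In p (p1 :: ps) /\ matched p x y).
    { intros x y [H|H]; [exists p1; split; [now left|exact H]|apply HL, H]. }
    intros x y x' y' H H'.
    destruct (Hin x y H) as [p [Hp Hxy]], (Hin x' y' H') as [p' [Hp' Hxy']].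
    exact (key_partial_bij k p p' x y x' y' (Hps p Hp) (Hps p' Hp') Hxy Hxy').
  - exists q. intros p Hp. apply (stronger_same_key k p1 p q H1 (Hps p Hp) Hq1).
    intros x y Hxy. apply Hq, HL. eauto.
Qed.

Lemma cond_sigma_centered : sigma_centered cond stronger.
Proof. exists key_class. split; [exact key_cover|exact key_centered]. Qed.

(** ** The generic homeomorphism *)

Section Generic.
Variable G : cond -> Prop.
Hypothesis G_filter : is_filter cond stronger G.
Hypothesis G_generic : forall j, exists p, G p /\ requirement j p.

(** Permutations of conditions in the filter agree at the smaller level,
    through a common extension. *)
Lemma filter_coherent p q x : G p -> G q ->
  agree (min (lev p) (lev q)) (approx p x) (approx q x).
Proof.
  intros Hp Hq. destruct G_filter as [_ [_ Gdir]].
  destruct (Gdir p q Hp Hq) as [r [_ [[Hrp [Hrefp _]] [Hrq [Hrefq _]]]]].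
  eapply agree_trans; [apply agree_sym, (agree_mono _ (lev p)); [lia|apply Hrefp]|].
  apply (agree_mono _ (lev q)); [lia|apply Hrefq].
Qed.

Lemma generic_homeomorphism (a0 : K) :
  exists f, homeomorphism f /\ forall a y, image f (A a) y <-> B a y.
Proof.
  destruct (choice (fun k p => G p /\ requirement (a0, S k) p) (fun k => G_generic (a0, S k)))
    as [pk Hpk].
  destruct (limit_homeomorphism (fun k => lev (pk k)) (fun k => approx (pk k))) as [f [Hhom Hf]].
  - intro k. exact (valid_perm (cond_valid (pk k))).
  - intro k. destruct (Hpk k) as [_ [Hk _]]. lia.
  - intros i j x. apply filter_coherent; apply Hpk.
  -
    assert (Hmatch : forall p x y, G p -> matched p x y -> f x = y).
    { intros p x y Hp Hxy. apply functional_extensionality; intro k.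
      destruct (Hpk k) as [Hk [Hlev _]]. destruct G_filter as [_ [_ Gdir]].
      destruct (Gdir p (pk k) Hp Hk) as [r [_ [[_ [_ Hrp]] [Hrk [Hrefk _]]]]].
      assert (H : agree (lev (pk k)) (f x) y); [|apply H; lia].
      eapply agree_trans; [apply agree_sym, Hf|]. eapply agree_trans; [apply agree_sym, Hrefk|].
      apply (agree_mono _ (lev r)); [exact Hrk|]. apply (valid_respects (cond_valid r)), Hrp, Hxy. }
    exists f. split; [exact Hhom|]. intros a y. split.
    + intros [x [Hx <-]]. destruct (eA_onto a x Hx) as [i <-].
      destruct (G_generic (a, i)) as [p [Hp [_ [HA _]]]]. destruct (HA Hx) as [y Hxy].
      destruct (valid_colour (cond_valid p) _ _ Hxy) as [b [Hb1 Hb2]].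
      rewrite (Hmatch p _ y Hp Hxy), (A_disj a b _ Hx Hb1). exact Hb2.
    + intro Hy. destruct (eB_onto a y Hy) as [j <-].
      destruct (G_generic (a, j)) as [p [Hp [_ [_ HB]]]]. destruct (HB Hy) as [x Hxy].
      destruct (valid_colour (cond_valid p) _ _ Hxy) as [b [Hb1 Hb2]].
      exists x. split; [|exact (Hmatch p _ _ Hp Hxy)]. rewrite (B_disj a b _ Hy Hb2). exact Hb1.
Qed.

End Generic.
End Forcing.

Lemma id_homeomorphism : homeomorphism (fun x => x).
Proof.
  exists (fun x => x). split; [reflexivity|split; [reflexivity|]].
  split; intros x n; exists n; auto.
Qed.

Theorem theorem2p1 (MA : MA_sigma_centered)
  (K : Type) (hK : lt_continuum K)
  (A B : K -> Cantor -> Prop)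
  (hA : forall a, countable (A a) /\ dense (A a))
  (hB : forall a, countable (B a) /\ dense (B a))
  (hAdisj : forall a b, a <> b -> forall x, A a x -> A b x -> False)
  (hBdisj : forall a b, a <> b -> forall x, B a x -> B b x -> False) :
  exists f : Cantor -> Cantor, homeomorphism f /\
    forall a (y : Cantor), image f (A a) y <-> B a y.
Proof.
  (* With no colours the identity works; otherwise a colour [a0] indexes the
     requirements that raise the level. *)
  destruct (classic (inhabited K)) as [[a0]|HK].
  2: { exists (fun x => x). split; [exact id_homeomorphism|]. intro a. exfalso. exact (HK (inhabits a)). }
  destruct (choice (fun a e => forall x, A a x -> exists i, e i = x) (fun a => proj1 (hA a)))
    as [eA HeA].
  destruct (choice (fun a e => forall y, B a y -> exists j, e j = y) (fun a => proj1 (hB a)))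
    as [eB HeB].
  assert (A_disj : forall a b x, A a x -> A b x -> a = b).
  { intros a b x Ha Hb. apply NNPP; intro Hne. exact (hAdisj a b Hne x Ha Hb). }
  assert (B_disj : forall a b y, B a y -> B b y -> a = b).
  { intros a b y Ha Hb. apply NNPP; intro Hne. exact (hBdisj a b Hne y Ha Hb). }
  destruct (MA (cond K A B) (stronger K A B) (inhabits (cond0 K A B)) (cond_poset K A B)
    (cond_sigma_centered K A B eA eB HeA HeB A_disj B_disj) (K * nat)%type (requirement K A B eA eB)
    (lt_continuum_prod K hK)
    (requirement_dense K A B eA eB (fun a => proj2 (hA a)) (fun a => proj2 (hB a))))
    as [G [HG Hgen]].
  exact (generic_homeomorphism K A B eA eB HeA HeB A_disj B_disj G HG Hgen a0).
Qed.
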